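(* Let $\psi_S$ be the Shannon wavelet, i.e. $|\hat\psi_S(\xi)|^2=1$ if $|\xi|\in[\pi,2\pi]$ and $0$ otherwise, and take $\psi=\psi_S$ in the definitions of the context. Then for every $d\in\mathbb{R}$ and $\ell\ge1$, $$\sum_{i,j=0}^\ell w^{AV}_iV_d(i,j)w^{AV}_j=\frac{\pi\,g(-4d)}{2(2-2^{-\ell})\kappa_\ell\log^2(2)\,g^2(-2d)},\qquad g(x)=\int_\pi^{2\pi}\lambda^x\,d\lambda.$$
   Context: For a wavelet $\psi$ with Fourier transform $\hat\psi(\xi)=\int\psi(t)e^{-i\xi t}dt$: for $u\ge0$, $\mathbf e_u(\xi)=2^{-u/2}[1,e^{-i2^{-u}\xi},\dots,e^{-i(2^u-1)2^{-u}\xi}]^T$, $\mathbf D_u(\lambda;d)=\sum_{l\in\mathbb{Z}}|\lambda+2l\pi|^{-2d}\mathbf e_u(\lambda+2l\pi)\overline{\hat\psi(\lambda+2l\pi)}\hat\psi(2^{-u}(\lambda+2l\pi))$, $I_u(d)=\int_{-\pi}^{\pi}|\mathbf D_u(\lambda;d)|^2d\lambda$, $K(d)=\int_{\mathbb{R}}|\xi|^{-2d}|\hat\psi(\xi)|^2d\xi$, $V_d(i,j)=\frac{4\pi\,2^{2d|i-j|}2^{i\wedge j}}{K(d)^2}I_{|i-j|}(d)$. For $\ell\ge1$: $\eta_\ell=\sum_{j=0}^\ell j\frac{2^{-j}}{2-2^{-\ell}}$, $\kappa_\ell=\sum_{j=0}^\ell(j-\eta_\ell)^2\frac{2^{-j}}{2-2^{-\ell}}$,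 $w^{AV}_i=\frac{(i-\eta_\ell)2^{-i}}{2\log(2)\kappa_\ell(2-2^{-\ell})}$, $i=0,\dots,\ell$. *)

From Stdlib Require Import Reals Lra ZArith Classical ClassicalEpsilon.
Open Scope R_scope.

Definition Cx := (R * R)%type.
Definition Cadd (z w : Cx) : Cx := (fst z + fst w, snd z + snd w).
Definition Cmul (z w : Cx) : Cx :=
  (fst z * fst w - snd z * snd w, fst z * snd w + snd z * fst w).
Definition Cconj (z : Cx) : Cx := (fst z, - snd z).
Definition Cscal (r : R) (z : Cx) : Cx := (r * fst z, r * snd z).
Definition Cnorm2 (z : Cx) : R := fst z ^ 2 + snd z ^ 2.
Definition Cexpi (t : R) : Cx := (cos t, sin t).

Definition series_Z (f : Z -> R) (s : R) : Prop :=
  exists s1 s2,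
    infinite_sum (fun n => f (Z.of_nat n)) s1 /\
    infinite_sum (fun n => f (- Z.of_nat (S n))%Z) s2 /\ s = s1 + s2.
Definition zsumR (f : Z -> R) : R := epsilon (inhabits 0) (series_Z f).
Definition zsumC (f : Z -> Cx) : Cx :=
  (zsumR (fun l => fst (f l)), zsumR (fun l => snd (f l))).

Definition Rint (f : R -> R) (a b : R) : R :=
  epsilon (inhabits 0)
    (fun v => exists pr : Riemann_integrable f a b, RiemannInt pr = v).
Definition improper_int (f : R -> R) (v : R) : Prop :=
  forall eps, eps > 0 -> exists M, forall a b, a <= - M -> M <= b ->
    exists pr : Riemann_integrable f a b, Rabs (RiemannInt pr - v) < eps.
Definition RintR (f : R -> R) : R := epsilon (inhabits 0) (improper_int f).

(* k-th component (k = 0..2^u-1) of e_u(xi) *)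
Definition e_u (u : nat) (xi : R) (k : nat) : Cx :=
  Cscal (Rpower 2 (- INR u / 2)) (Cexpi (- INR k * xi / 2 ^ u)).

Definition D_u (psih : R -> Cx) (d : R) (u : nat) (lam : R) (k : nat) : Cx :=
  zsumC (fun l =>
    let x := lam + 2 * IZR l * PI in
    Cscal (Rpower (Rabs x) (- 2 * d))
      (Cmul (e_u u x k) (Cmul (Cconj (psih x)) (psih (x / 2 ^ u))))).

Definition D_u_norm2 (psih : R -> Cx) (d : R) (u : nat) (lam : R) : R :=
  sum_f_R0 (fun k => Cnorm2 (D_u psih d u lam k)) (Nat.pow 2 u - 1).

Definition I_u (psih : R -> Cx) (u : nat) (d : R) : R :=
  Rint (fun lam => D_u_norm2 psih d u lam) (- PI) PI.

Definition K_d (psih : R -> Cx) (d : R) : R :=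
  RintR (fun xi => Rpower (Rabs xi) (- 2 * d) * Cnorm2 (psih xi)).

Definition absdiff (i j : nat) : nat := ((i - j) + (j - i))%nat.

Definition V_d (psih : R -> Cx) (d : R) (i j : nat) : R :=
  4 * PI * Rpower 2 (2 * d * INR (absdiff i j)) * 2 ^ (Nat.min i j)
    * I_u psih (absdiff i j) d / (K_d psih d) ^ 2.

Definition eta (l : nat) : R :=
  sum_f_R0 (fun j => INR j * (/ 2) ^ j / (2 - (/ 2) ^ l)) l.
Definition kappa (l : nat) : R :=
  sum_f_R0 (fun j => (INR j - eta l) ^ 2 * (/ 2) ^ j / (2 - (/ 2) ^ l)) l.
Definition wAV (l i : nat) : R :=
  (INR i - eta l) * (/ 2) ^ i / (2 * ln 2 * kappa l * (2 - (/ 2) ^ l)).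

Definition g (x : R) : R := Rint (fun lam => Rpower lam x) PI (2 * PI).

Definition shannon (psih : R -> Cx) : Prop :=
  forall xi, (PI <= Rabs xi <= 2 * PI -> Cnorm2 (psih xi) = 1) /\
             (~ (PI <= Rabs xi <= 2 * PI) -> Cnorm2 (psih xi) = 0).

From Stdlib Require Import Reals Lra Lia ZArith Classical ClassicalEpsilon FunctionalExtensionality.
Open Scope R_scope.

(* For the Shannon wavelet |psi^(xi)|^2 is the indicator of pi <= |xi| <= 2pi.
   In the aliased series defining D_u(lam; d), for lam in (-pi, pi) \ {0}
   exactly one index l puts lam + 2 l pi in the band, namely l = 1 for
   lam < 0 and l = -1 for lam > 0, and then |lam + 2 l pi| = 2pi - |lam|.
   Consequently:
   - for u >= 1 the rescaled point (lam + 2 l pi) / 2^u is never in the band,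
     so D_u vanishes almost everywhere and I_u(d) = 0: V_d is diagonal;
   - for u = 0, |D_0(lam)|^2 = (2pi - |lam|)^(-4d), so I_0(d) = 2 g(-4d),
     and likewise K(d) = 2 g(-2d).
   Hence V_d(i,i) = 2 pi 2^i g(-4d) / g(-2d)^2, the quadratic form reduces to
   sum_i (w_i)^2 V_d(i,i), and sum_i (w_i)^2 2^i = 1 / (4 log^2 2 kappa (2 - 2^-l))
   by the definition of kappa. *)

Definition has_integral (f : R -> R) (a b v : R) : Prop :=
  exists pr : Riemann_integrable f a b, RiemannInt pr = v.

Lemma Rint_of_has_integral f a b v : has_integral f a b v -> Rint f a b = v.
Proof.
  intros H. unfold Rint. fold (has_integral f a b).
  destruct (epsilon_spec (inhabits 0) (has_integral f a b) (ex_intro _ v H))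
    as [pr' Hpr'].
  destruct H as [pr Hpr]. rewrite <- Hpr', <- Hpr. apply RiemannInt_P5.
Qed.

Lemma has_integral_chasles f a b c v1 v2 :
  has_integral f a b v1 -> has_integral f b c v2 -> has_integral f a c (v1 + v2).
Proof.
  intros [p1 H1] [p2 H2]. exists (RiemannInt_P24 p1 p2).
  rewrite <- (RiemannInt_P26 p1 p2 (RiemannInt_P24 p1 p2)), H1, H2. reflexivity.
Qed.

Lemma RiemannInt_antiderivative f G a b (hab : a <= b)
  (C : forall t, a <= t <= b -> continuity_pt f t)
  (D : forall t, a <= t <= b -> derivable_pt_lim G t (f t))
  (pr : Riemann_integrable f a b) : RiemannInt pr = G b - G a.
Proof.
  rewrite (RiemannInt_P20 hab (FTC_P1 hab C) pr).
  assert (HA : antiderivative f G a b).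
  { split; [|exact hab]. intros x Hx. exists (exist _ (f x) (D x Hx)). reflexivity. }
  destruct (antiderivative_Ucte _ _ _ _ _ (RiemannInt_P29 hab C) HA) as [c Hc].
  rewrite (Hc b), (Hc a); lra.
Qed.

Lemma StepFun_zero_inside f a b : a <= b -> (forall t, a < t < b -> f t = 0) ->
  IsStepFun f a b.
Proof.
  intros hab H. exists (cons a (cons b nil)), (cons 0 nil).
  unfold adapted_couple; repeat split.
  - intros i Hi; simpl in Hi; inversion Hi; [simpl; exact hab | lia].
  - simpl; unfold Rmin; destruct (Rle_dec a b); lra.
  - simpl; unfold Rmax; destruct (Rle_dec a b); lra.
  - intros i Hi t Ht; simpl in Hi; inversion Hi; [|lia].
    subst i; simpl in *; unfold open_interval in Ht; apply H; lra.
Qed.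

Lemma integrable_zero_inside f a b : a <= b -> (forall t, a < t < b -> f t = 0) ->
  Riemann_integrable f a b.
Proof.
  intros hab H eps.
  exists (mkStepFun (StepFun_zero_inside f a b hab H)), (mkStepFun (StepFun_P4 a b 0)).
  split.
  - intros t _. simpl. unfold fct_cte. rewrite Rminus_diag, Rabs_R0. lra.
  - rewrite StepFun_P18, Rmult_0_l, Rabs_R0. apply cond_pos.
Qed.

(* FTC for an integrand that agrees with a continuous h only on the open
   interval: endpoint values do not affect the Riemann integral. *)
Lemma has_integral_antiderivative_inside f h G a b : a <= b ->
  (forall t, a < t < b -> f t = h t) ->
  (forall t, a <= t <= b -> continuity_pt h t) ->
  (forall t, a <= t <= b -> derivable_pt_lim G t (h t)) ->
  has_integral f a b (G b - G a).
Proof.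
  intros hab E C D.
  pose proof (continuity_implies_RiemannInt hab C) as prh.
  assert (pr : Riemann_integrable f a b).
  { apply Riemann_integrable_ext with (fun x => h x + 1 * (f x - h x)).
    - intros; ring.
    - apply RiemannInt_P10; [exact prh|].
      apply integrable_zero_inside; [exact hab|]. intros t Ht; rewrite E; auto; ring. }
  exists pr. rewrite (RiemannInt_P18 pr prh hab E).
  apply RiemannInt_antiderivative; auto.
Qed.

Lemma has_integral_zero_inside f a b : a <= b -> (forall t, a < t < b -> f t = 0) ->
  has_integral f a b 0.
Proof.
  intros hab E. replace 0 with ((fun _ : R => 0) b - (fun _ : R => 0) a) by ring.
  apply (has_integral_antiderivative_inside f (fun _ => 0) (fun _ => 0)); auto.
  - intros; apply continuity_pt_const; intros u v; reflexivity.
  - intros; apply derivable_pt_lim_const.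
Qed.

Definition power_primitive (x : R) : R -> R :=
  if Req_EM_T x (-1) then ln else fun s => Rpower s (x + 1) / (x + 1).

Lemma power_primitive_deriv x s : 0 < s ->
  derivable_pt_lim (power_primitive x) s (Rpower s x).
Proof.
  intros Hs. unfold power_primitive. destruct (Req_EM_T x (-1)) as [E|E].
  - subst x. replace (Rpower s (-1)) with (/ s).
    + apply derivable_pt_lim_ln; exact Hs.
    + replace (-1) with (- (1)) by ring. rewrite Rpower_Ropp, Rpower_1; auto.
  - assert (Hx : x + 1 <> 0) by lra.
    replace (fun s0 => Rpower s0 (x + 1) / (x + 1))
      with (mult_real_fct (/ (x + 1)) (fun s0 => Rpower s0 (x + 1))).
    + replace (Rpower s x) with (/ (x + 1) * ((x + 1) * Rpower s (x + 1 - 1))).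
      * apply derivable_pt_lim_scal, derivable_pt_lim_power; exact Hs.
      * replace (x + 1 - 1) with x by ring. field. exact Hx.
    + apply functional_extensionality; intro y; unfold mult_real_fct; field; exact Hx.
Qed.

Lemma affine_deriv c e t : derivable_pt_lim (fun t => c * t + e) t c.
Proof.
  intros eps Heps. exists (mkposreal 1 Rlt_0_1). intros h Hh _.
  replace ((c * (t + h) + e - (c * t + e)) / h - c) with 0 by (field; exact Hh).
  rewrite Rabs_R0; exact Heps.
Qed.

Lemma affine_power_primitive_deriv x c e t : c <> 0 -> 0 < c * t + e ->
  derivable_pt_lim (fun t => power_primitive x (c * t + e) / c) t (Rpower (c * t + e) x).
Proof.
  intros Hc H.
  replace (fun t => power_primitive x (c * t + e) / c)
    with (mult_real_fct (/ c) (fun t => power_primitive x (c * t + e))).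
  - replace (Rpower (c * t + e) x) with (/ c * (Rpower (c * t + e) x * c))
      by (field; exact Hc).
    apply derivable_pt_lim_scal.
    apply (derivable_pt_lim_comp (fun t => c * t + e) (power_primitive x)).
    + apply affine_deriv.
    + apply power_primitive_deriv; exact H.
  - apply functional_extensionality; intro y; unfold mult_real_fct; field; exact Hc.
Qed.

(* Integral of (c t + e)^x over [a, b], stated with the images A, B of the
   endpoints so that applications need no rewriting of the endpoints. *)
Lemma has_integral_affine_power f x c e a b A B :
  a <= b -> c <> 0 -> c * a + e = A -> c * b + e = B ->
  (forall t, a <= t <= b -> 0 < c * t + e) ->
  (forall t, a < t < b -> f t = Rpower (c * t + e) x) ->
  has_integral f a b ((power_primitive x B - power_primitive x A) / c).
Proof.
  intros hab Hc <- <- Hpos E.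
  replace ((power_primitive x (c * b + e) - power_primitive x (c * a + e)) / c) with
    (power_primitive x (c * b + e) / c - power_primitive x (c * a + e) / c)
    by (field; exact Hc).
  apply (has_integral_antiderivative_inside f (fun t => Rpower (c * t + e) x)
           (fun t => power_primitive x (c * t + e) / c)); auto.
  - intros t Ht. apply derivable_continuous_pt.
    exists (x * Rpower (c * t + e) (x - 1) * c).
    apply (derivable_pt_lim_comp (fun t => c * t + e) (fun s => Rpower s x)).
    + apply affine_deriv.
    + apply derivable_pt_lim_power; auto.
  - intros t Ht. apply affine_power_primitive_deriv; auto.
Qed.

(* Crude bounds on pi, enough to order the points -2pi, -pi, 0, pi, 2pi, 8. *)
Lemma PI_bounds : 0 < PI <= 4.
Proof. split; [apply PI_RGT_0 | apply PI_4]. Qed.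

Lemma g_primitive x : g x = power_primitive x (2 * PI) - power_primitive x PI.
Proof.
  pose proof PI_bounds. unfold g. apply Rint_of_has_integral.
  replace (power_primitive x (2 * PI) - power_primitive x PI) with
    ((power_primitive x (2 * PI) - power_primitive x PI) / 1) by field.
  apply (has_integral_affine_power _ x 1 0); intros; try lra.
  f_equal; ring.
Qed.

Lemma improper_int_unique f v1 v2 : improper_int f v1 -> improper_int f v2 -> v1 = v2.
Proof.
  intros H1 H2. destruct (Req_dec v1 v2) as [E|N]; auto. exfalso.
  set (e := Rabs (v1 - v2) / 2).
  assert (He : e > 0) by (unfold e; pose proof (Rabs_pos_lt (v1 - v2) ltac:(lra)); lra).
  destruct (H1 e He) as [M1 K1], (H2 e He) as [M2 K2].
  set (B := Rabs M1 + Rabs M2).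
  pose proof (Rle_abs M1). pose proof (Rle_abs M2).
  pose proof (Rabs_pos M1). pose proof (Rabs_pos M2).
  destruct (K1 (- B) B ltac:(unfold B; lra) ltac:(unfold B; lra)) as [p1 Q1].
  destruct (K2 (- B) B ltac:(unfold B; lra) ltac:(unfold B; lra)) as [p2 Q2].
  rewrite (RiemannInt_P5 p1 p2) in Q1.
  pose proof (Rabs_triang (v1 - RiemannInt p2) (RiemannInt p2 - v2)) as T.
  rewrite <- Rabs_Ropp in Q1. unfold e in *.
  replace (v1 - RiemannInt p2 + (RiemannInt p2 - v2)) with (v1 - v2) in T by ring.
  replace (- (RiemannInt p2 - v1)) with (v1 - RiemannInt p2) in Q1 by ring.
  lra.
Qed.

Lemma zsumR_unique f s : series_Z f s -> zsumR f = s.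
Proof.
  intros H. unfold zsumR.
  destruct (epsilon_spec (inhabits 0) (series_Z f) (ex_intro _ s H))
    as [t1 [t2 [H1 [H2 ->]]]].
  destruct H as [s1 [s2 [K1 [K2 ->]]]].
  rewrite (uniqueness_sum _ _ _ H1 K1), (uniqueness_sum _ _ _ H2 K2). reflexivity.
Qed.

Lemma sum_f_R0_single (a : nat -> R) i n : (forall j, j <> i -> a j = 0) ->
  sum_f_R0 a n = if Nat.leb i n then a i else 0.
Proof.
  intros H. induction n as [|n IH].
  - destruct i as [|i]; simpl; [reflexivity | apply H; lia].
  - simpl. rewrite IH.
    destruct (Nat.leb_spec i n), (Nat.leb_spec i (S n)); try lia.
    + rewrite (H (S n)) by lia; ring.
    + replace (S n) with i by lia. ring.
    + rewrite (H (S n)) by lia; ring.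
Qed.

Lemma infinite_sum_single (a : nat -> R) i c : a i = c ->
  (forall j, j <> i -> a j = 0) -> infinite_sum a c.
Proof.
  intros Hi H eps Heps. exists i. intros n Hn.
  rewrite (sum_f_R0_single a i n H).
  destruct (Nat.leb_spec i n); [|lia].
  unfold Rdist. rewrite Hi, Rminus_diag, Rabs_R0. lra.
Qed.

Lemma zsumR_single f l0 : (forall l, l <> l0 -> f l = 0) -> zsumR f = f l0.
Proof.
  intros H. apply zsumR_unique.
  destruct (Z_lt_le_dec l0 0) as [Hneg|Hpos].
  - exists 0, (f l0). split; [|split; [|ring]].
    + apply (infinite_sum_single _ 0); [apply H; lia|]. intros n _. apply H. lia.
    + apply (infinite_sum_single _ (Z.to_nat (- l0 - 1))); [f_equal; lia|].
      intros n Hn. apply H. lia.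
  - exists (f l0), 0. split; [|split; [|ring]].
    + apply (infinite_sum_single _ (Z.to_nat l0)); [f_equal; lia|].
      intros n Hn. apply H. lia.
    + apply (infinite_sum_single _ 0); [apply H; lia|]. intros n _. apply H. lia.
Qed.

Lemma zsumC_single f l0 : (forall l, l <> l0 -> f l = (0, 0)) -> zsumC f = f l0.
Proof.
  intros H. unfold zsumC.
  rewrite (zsumR_single (fun l => fst (f l)) l0), (zsumR_single (fun l => snd (f l)) l0).
  - symmetry; apply surjective_pairing.
  - intros l Hl. rewrite H; auto.
  - intros l Hl. rewrite H; auto.
Qed.

Lemma Cnorm2_eq0 z : Cnorm2 z = 0 -> z = (0, 0).
Proof.
  destruct z as [p q]; unfold Cnorm2; simpl; intros H.
  f_equal; nra.
Qed.

Definition alias_term (psih : R -> Cx) (d : R) (u : nat) (lam : R) (k : nat) (l : Z) : Cx :=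
  let x := lam + 2 * IZR l * PI in
  Cscal (Rpower (Rabs x) (- 2 * d))
    (Cmul (e_u u x k) (Cmul (Cconj (psih x)) (psih (x / 2 ^ u)))).

Lemma D_u_alias psih d u lam k : D_u psih d u lam k = zsumC (alias_term psih d u lam k).
Proof. reflexivity. Qed.

Lemma alias_term_vanish psih d u lam k l :
  Cnorm2 (psih (lam + 2 * IZR l * PI)) = 0 \/
  Cnorm2 (psih ((lam + 2 * IZR l * PI) / 2 ^ u)) = 0 ->
  alias_term psih d u lam k l = (0, 0).
Proof.
  unfold alias_term. set (x := lam + 2 * IZR l * PI). cbv zeta.
  destruct (psih x) as [p1 p2], (psih (x / 2 ^ u)) as [q1 q2], (e_u u x k) as [r1 r2].
  intros [H|H]; apply Cnorm2_eq0 in H; injection H as -> ->;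
    unfold Cscal, Cmul, Cconj; simpl; apply injective_projections; simpl; ring.
Qed.

Lemma e_u_zero x : e_u 0 x 0 = (1, 0).
Proof.
  unfold e_u, Cscal, Cexpi. simpl INR.
  replace (- 0 / 2) with 0 by field. replace (- 0 * x / 2 ^ 0) with 0 by (simpl; field).
  rewrite Rpower_O, cos_0, sin_0 by lra. simpl. f_equal. all: ring.
Qed.

Lemma alias_term_same_scale psih d lam l :
  Cnorm2 (psih (lam + 2 * IZR l * PI)) = 1 ->
  alias_term psih d 0 lam 0 l = (Rpower (Rabs (lam + 2 * IZR l * PI)) (- 2 * d), 0).
Proof.
  unfold alias_term. set (x := lam + 2 * IZR l * PI). cbv zeta.
  replace (x / 2 ^ 0) with x by (simpl; field). rewrite e_u_zero.
  destruct (psih x) as [p1 p2]. unfold Cnorm2; cbn [fst snd]. intros H.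
  unfold Cscal, Cmul, Cconj; cbn [fst snd]. f_equal; [|ring].
  transitivity (Rpower (Rabs x) (-2 * d) * (p1 ^ 2 + p2 ^ 2)); [ring|]. rewrite H; ring.
Qed.

(* The unique alias of lam in (-pi, pi) \ {0} falling in the Shannon band. *)
Definition alias_index (lam : R) : Z := if Rlt_dec lam 0 then 1%Z else (-1)%Z.

Lemma alias_index_abs lam : - PI < lam < PI ->
  Rabs (lam + 2 * IZR (alias_index lam) * PI) = 2 * PI - Rabs lam.
Proof.
  intros H. pose proof PI_bounds. unfold alias_index.
  destruct (Rlt_dec lam 0); simpl; unfold Rabs;
    repeat destruct (Rcase_abs _); lra.
Qed.

Lemma alias_index_unique lam l : - PI < lam < PI -> lam <> 0 ->
  PI <= Rabs (lam + 2 * IZR l * PI) <= 2 * PI -> l = alias_index lam.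
Proof.
  intros H1 H2 H3. pose proof PI_bounds.
  pose proof (Rle_abs (lam + 2 * IZR l * PI)).
  pose proof (Rle_abs (- (lam + 2 * IZR l * PI))). rewrite Rabs_Ropp in *.
  assert (Hl : (-1 <= l <= 1)%Z).
  { split; apply le_IZR; simpl; apply Rnot_lt_le; intros C.
    - assert (IZR l <= -2) by (apply IZR_le; apply lt_IZR in C; lia). nra.
    - assert (2 <= IZR l) by (apply IZR_le; apply lt_IZR in C; lia). nra. }
  unfold alias_index.
  assert (Hc : (l = -1 \/ l = 0 \/ l = 1)%Z) by lia.
  destruct Hc as [ -> | [ -> | -> ] ]; simpl in *;
    destruct (Rlt_dec lam 0); try reflexivity; exfalso;
    revert H3; unfold Rabs; repeat destruct (Rcase_abs _); intros; lra.
Qed.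

Section Shannon.

Variable psih : R -> Cx.
Hypothesis Hpsi : shannon psih.

Lemma shannon_band x : PI <= Rabs x <= 2 * PI -> Cnorm2 (psih x) = 1.
Proof. apply (proj1 (Hpsi x)). Qed.

Lemma shannon_outside x : ~ (PI <= Rabs x <= 2 * PI) -> Cnorm2 (psih x) = 0.
Proof. apply (proj2 (Hpsi x)). Qed.

(* Across different scales (u >= 1) the only alias in the band is mapped by
   x |-> x / 2^u strictly inside (-pi, pi), so every term vanishes. *)
Lemma D_u_norm2_cross_scale d u lam : (1 <= u)%nat -> - PI < lam < PI -> lam <> 0 ->
  D_u_norm2 psih d u lam = 0.
Proof.
  intros Hu Hlam Hnz. pose proof PI_bounds.
  assert (Hq : 2 <= 2 ^ u).
  { destruct u as [|u]; [lia|]. simpl. pose proof (pow_R1_Rle 2 u). lra. }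
  assert (Hterm : forall k l, alias_term psih d u lam k l = (0, 0)).
  { intros k l. apply alias_term_vanish.
    destruct (classic (PI <= Rabs (lam + 2 * IZR l * PI) <= 2 * PI)) as [C|C].
    2:{ left. apply shannon_outside. exact C. }
    right. apply shannon_outside.
    pose proof (alias_index_unique lam l Hlam Hnz C) as E. subst l.
    pose proof (alias_index_abs lam Hlam) as Habs.
    pose proof (Rabs_pos_lt lam Hnz).
    set (x := lam + 2 * IZR (alias_index lam) * PI) in *.
    unfold Rdiv. rewrite Rabs_mult, Rabs_inv, (Rabs_pos_eq (2 ^ u)) by lra.
    assert (Hinv : Rabs x * / 2 ^ u * 2 ^ u = Rabs x) by (field; lra).
    intros [C1 _]. nra. }
  unfold D_u_norm2.
  rewrite sum_eq with (Bn := fun _ => 0), sum_cte; [ring|].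
  intros k _. rewrite D_u_alias, (zsumC_single _ 0%Z), Hterm; [|intros l _; apply Hterm].
  unfold Cnorm2; simpl; ring.
Qed.

Lemma D_u_norm2_same_scale d lam : - PI < lam < PI -> lam <> 0 ->
  D_u_norm2 psih d 0 lam = Rpower (2 * PI - Rabs lam) (- 4 * d).
Proof.
  intros Hlam Hnz. pose proof PI_bounds.
  set (l0 := alias_index lam).
  pose proof (alias_index_abs lam Hlam) as Habs. fold l0 in Habs.
  pose proof (Rabs_pos_lt lam Hnz).
  change (Cnorm2 (D_u psih d 0 lam 0) = Rpower (2 * PI - Rabs lam) (- 4 * d)).
  rewrite D_u_alias, (zsumC_single _ l0).
  - assert (Rabs lam < PI) by (unfold Rabs; destruct (Rcase_abs lam); lra).
    rewrite alias_term_same_scale by (apply shannon_band; rewrite Habs; lra).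
    rewrite Habs.
    unfold Cnorm2; cbn [fst snd].
    replace (-4 * d) with (-2 * d + -2 * d) by ring. rewrite Rpower_plus. ring.
  - intros l Hl. apply alias_term_vanish. left. apply shannon_outside.
    intros C. exact (Hl (alias_index_unique lam l Hlam Hnz C)).
Qed.

Lemma I_u_cross_scale d u : (1 <= u)%nat -> I_u psih u d = 0.
Proof.
  intros Hu. pose proof PI_bounds. unfold I_u. apply Rint_of_has_integral.
  replace 0 with (0 + 0) by ring. apply has_integral_chasles with 0;
    apply has_integral_zero_inside; try lra;
    intros t Ht; apply D_u_norm2_cross_scale; auto; lra.
Qed.

Lemma I_u_same_scale d : I_u psih 0 d = 2 * g (- 4 * d).
Proof.
  pose proof PI_bounds. unfold I_u. apply Rint_of_has_integral.
  set (P := power_primitive (-4 * d)).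
  replace (2 * g (-4 * d)) with ((P (2 * PI) - P PI) / 1 + (P PI - P (2 * PI)) / -1)
    by (rewrite g_primitive; unfold P; field).
  apply has_integral_chasles with 0.
  - apply (has_integral_affine_power _ _ 1 (2 * PI)); intros; try lra.
    rewrite D_u_norm2_same_scale, Rabs_left by lra. f_equal; ring.
  - apply (has_integral_affine_power _ _ (-1) (2 * PI)); intros; try lra.
    rewrite D_u_norm2_same_scale, Rabs_right by lra. f_equal; ring.
Qed.

Lemma shannon_weight_integral d a b : a <= - (2 * PI) -> 2 * PI <= b ->
  has_integral (fun xi => Rpower (Rabs xi) (-2 * d) * Cnorm2 (psih xi)) a b
    (2 * g (- 2 * d)).
Proof.
  intros Ha Hb. pose proof PI_bounds.
  set (F := fun xi => Rpower (Rabs xi) (-2 * d) * Cnorm2 (psih xi)).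
  assert (Hout : forall t, ~ (PI <= Rabs t <= 2 * PI) -> F t = 0).
  { intros t Ht. unfold F. rewrite shannon_outside; auto. ring. }
  set (P := power_primitive (-2 * d)).
  replace (2 * g (-2 * d)) with
    (0 + ((P PI - P (2 * PI)) / -1 + (0 + ((P (2 * PI) - P PI) / 1 + 0))))
    by (rewrite g_primitive; unfold P; field).
  apply has_integral_chasles with (- (2 * PI)).
  { apply has_integral_zero_inside; [lra|]. intros t Ht. apply Hout.
    unfold Rabs; destruct (Rcase_abs t); lra. }
  apply has_integral_chasles with (- PI).
  { apply (has_integral_affine_power _ _ (-1) 0); intros; try lra.
    assert (PI <= Rabs t <= 2 * PI) by (unfold Rabs; destruct (Rcase_abs t); lra).
    unfold F. rewrite shannon_band, Rabs_left, Rmult_1_r by lra. f_equal; ring. }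
  apply has_integral_chasles with PI.
  { apply has_integral_zero_inside; [lra|]. intros t Ht. apply Hout.
    unfold Rabs; destruct (Rcase_abs t); lra. }
  apply has_integral_chasles with (2 * PI).
  { apply (has_integral_affine_power _ _ 1 0); intros; try lra.
    assert (PI <= Rabs t <= 2 * PI) by (unfold Rabs; destruct (Rcase_abs t); lra).
    unfold F. rewrite shannon_band, Rabs_right, Rmult_1_r by lra. f_equal; ring. }
  apply has_integral_zero_inside; [lra|]. intros t Ht. apply Hout.
  unfold Rabs; destruct (Rcase_abs t); lra.
Qed.

Lemma K_d_shannon d : K_d psih d = 2 * g (- 2 * d).
Proof.
  pose proof PI_bounds. unfold K_d, RintR.
  set (F := fun xi => Rpower (Rabs xi) (-2 * d) * Cnorm2 (psih xi)).
  assert (HI : improper_int F (2 * g (-2 * d))).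
  { intros eps Heps. exists 8. intros a b Ha Hb.
    destruct (shannon_weight_integral d a b ltac:(lra) ltac:(lra)) as [pr Hpr].
    exists pr. unfold F. rewrite Hpr, Rminus_diag, Rabs_R0. lra. }
  apply improper_int_unique with F; [|exact HI].
  apply (epsilon_spec (inhabits 0) (improper_int F) (ex_intro _ _ HI)).
Qed.

Lemma V_d_offdiag d i j : i <> j -> V_d psih d i j = 0.
Proof.
  intros Hij. unfold V_d. rewrite I_u_cross_scale by (unfold absdiff; lia).
  unfold Rdiv; ring.
Qed.

Lemma V_d_diag d i : V_d psih d i i = 2 * PI * 2 ^ i * g (- 4 * d) * / g (- 2 * d) ^ 2.
Proof.
  unfold V_d. replace (absdiff i i) with 0%nat by (unfold absdiff; lia).
  rewrite Nat.min_id, I_u_same_scale, K_d_shannon. simpl INR.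
  rewrite Rmult_0_r, Rpower_O by lra.
  unfold Rdiv. replace ((2 * g (-2 * d)) ^ 2) with (4 * g (-2 * d) ^ 2) by ring.
  rewrite Rinv_mult. set (c := / g (-2 * d) ^ 2). field.
Qed.
End Shannon.

Lemma quadratic_form_diagonal (w : nat -> R) (V : nat -> nat -> R) n :
  (forall i j, i <> j -> V i j = 0) ->
  sum_f_R0 (fun i => sum_f_R0 (fun j => w i * V i j * w j) n) n =
  sum_f_R0 (fun i => w i ^ 2 * V i i) n.
Proof.
  intros HV. apply sum_eq. intros i Hi.
  rewrite (sum_f_R0_single _ i n) by (intros j Hj; rewrite HV by auto; ring).
  destruct (Nat.leb_spec i n); [ring | lia].
Qed.

(* The weights satisfy sum_i (w_i)^2 2^i = 1 / (4 log^2 2 kappa (2 - 2^-l)); by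
   the definition of kappa this is immediate when kappa <> 0, and both sides
   are 0 when kappa = 0 (division by 0 is 0). *)
Lemma wAV_weighted_square_sum l : (1 <= l)%nat ->
  sum_f_R0 (fun i => wAV l i ^ 2 * 2 ^ i) l =
  / (4 * ln 2 ^ 2 * kappa l * (2 - (/ 2) ^ l)).
Proof.
  intros Hl. set (S := 2 - (/ 2) ^ l).
  assert (HS : 0 < S).
  { unfold S. rewrite pow_inv. destruct l as [|l]; [lia|].
    pose proof (pow_R1_Rle 2 l). simpl.
    assert (/ (2 * 2 ^ l) <= / 2) by (apply Rinv_le_contravar; lra). lra. }
  assert (Hln : ln 2 <> 0) by (pose proof ln_lt_2; lra).
  destruct (Req_dec (kappa l) 0) as [Hk|Hk].
  { rewrite Hk, Rmult_0_r, Rmult_0_l, Rinv_0. apply sum_eq_R0. intros i _.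
    unfold wAV. rewrite Hk, Rmult_0_r, Rmult_0_l. unfold Rdiv. rewrite Rinv_0. ring. }
  set (c := / (2 * ln 2 * kappa l * S) ^ 2 * S).
  rewrite (sum_eq _ (fun i => (INR i - eta l) ^ 2 * (/ 2) ^ i / S * c)).
  - rewrite <- scal_sum. change (c * kappa l = / (4 * ln 2 ^ 2 * kappa l * S)).
    unfold c. field. repeat split; lra.
  - intros i _. unfold wAV, c. fold S. rewrite pow_inv.
    assert (2 ^ i <> 0) by (apply pow_nonzero; lra).
    field. repeat split; lra.
Qed.

Theorem mainTheorem12 (psih : R -> Cx) (Hpsi : shannon psih) (d : R) (l : nat)
  (Hl : (1 <= l)%nat) :
  sum_f_R0 (fun i => sum_f_R0 (fun j => wAV l i * V_d psih d i j * wAV l j) l) l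
  = PI * g (- 4 * d)
    / (2 * (2 - (/ 2) ^ l) * kappa l * (ln 2) ^ 2 * (g (- 2 * d)) ^ 2).
Proof.
  rewrite quadratic_form_diagonal by (intros; apply V_d_offdiag; auto).
  set (c := 2 * PI * g (- 4 * d) * / g (- 2 * d) ^ 2).
  rewrite (sum_eq _ (fun i => wAV l i ^ 2 * 2 ^ i * c))
    by (intros i _; rewrite V_d_diag by exact Hpsi; unfold c; ring).
  rewrite <- scal_sum, wAV_weighted_square_sum by exact Hl.
  (* Both sides are now the same monomial in the reciprocals, which are kept
     as atoms so that no nonvanishing side condition is needed. *)
  unfold c, Rdiv. rewrite !Rinv_mult.
  set (iG := / g (-2 * d) ^ 2). set (iL := / ln 2 ^ 2).
  set (iK := / kappa l). set (iS := / (2 - (/ 2) ^ l)).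
  field.
Qed.
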